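(* Let $m,k,e,\ell$ be integers with $m,k,e$ positive, $0\le\ell\le m$, $k\mid m$, $e\equiv2^\ell\pmod{2^k-1}$ and $\gcd(2^m-1,e)=1$, and let $\eta$ satisfy $\eta e\equiv1\pmod{2^m-1}$. Let $P:\mathbb{F}_{2^k}\to\mathbb{F}_2$ be balanced and let $g:\mathbb{F}_{2^m}\times\mathbb{F}_{2^m}\to\mathbb{F}_2$ be the bent function $g(x,y)=P\bigl({\rm Tr}_k^m(xy^{-\eta})\bigr)$. Then the dual of $g$ is \[ g^{*}(x,y)=P\Bigl({\rm Tr}_k^m\bigl(yx^{-e}\bigr)^{2^{m-\ell}}\Bigr)=P\bigl({\rm Tr}_k^m(\tilde y\,\tilde x^{-e})\bigr),\quad \tilde y=y^{2^{m-\ell}},\ \tilde x=x^{2^{m-\ell}}.\]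
   Context: ${\rm Tr}_k^m$ is the trace map from $\mathbb{F}_{2^m}$ to $\mathbb{F}_{2^k}$. For $z\in\mathbb{F}_{2^m}$ and a positive integer $t$, $z^{-t}$ denotes $z^{t(2^m-2)}$ (so $0^{-t}=0$). $P$ balanced means $|P^{-1}(0)|=|P^{-1}(1)|$. The dual $g^*$ of a bent function $g$ on $\mathbb{F}_{2^m}\times\mathbb{F}_{2^m}$ is defined by $\sum_{(x,y)}(-1)^{g(x,y)+{\rm Tr}_1^m(ux+vy)}=2^m(-1)^{g^*(u,v)}$ for all $(u,v)$. *)

From HB Require Import structures.
From mathcomp Require Import all_boot all_order all_algebra all_field.
Set Implicit Arguments. Unset Strict Implicit. Unset Printing Implicit Defensive.
Import GRing.Theory.
Local Open Scope ring_scope.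

(* F is meant to be the finite field F_{2^m}. *)

Definition trKM (F : finFieldType) (k m : nat) (z : F) : F :=
  \sum_(i < m %/ k) z ^+ (2 ^ (k * i)).

Definition tr1 (F : finFieldType) (m : nat) (z : F) : F :=
  \sum_(i < m) z ^+ (2 ^ i).

(* z^{-t} := z^{t(2^m-2)}, with 0^{-t} = 0 *)
Definition negpow (F : finFieldType) (m t : nat) (z : F) : F :=
  if z == 0 then 0 else z ^+ (t * (2 ^ m - 2)).

Definition subfK (F : finFieldType) (k : nat) : {set F} :=
  [set z : F | z ^+ (2 ^ k) == z].

(* P : F_{2^k} -> F_2 is balanced (P given on F, only its values on F_{2^k} matter) *)
Definition balancedOn (F : finFieldType) (k : nat) (P : F -> bool) : Prop :=
  #|[set z in @subfK F k | P z]| = #|[set z in @subfK F k | ~~ P z]|.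

(* Walsh transform sum_{x,y} (-1)^{g(x,y) + Tr_1^m(ux+vy)} as an integer;
   Tr_1^m takes values in F_2 = {0,1} \subset F. *)
Definition walsh2 (F : finFieldType) (m : nat) (g : F -> F -> bool) (u v : F) : int :=
  \sum_(x : F) \sum_(y : F)
     ((-1) ^+ (g x y) * (-1) ^+ (tr1 m (u * x + v * y) != 0)).

(* Write chi_n(z) = (-1)^(Tr_1^n z) for the canonical additive character of F_(2^n); since
   Tr_1^m = Tr_1^k o Tr_k^m, chi_m(c z) = chi_k(c Tr_k^m z) for c in F_(2^k).
   For y <> 0 the substitution x := x y^eta turns the inner sum of the Walsh transform
   of g into the Fourier transform of P o Tr_k^m at u y^eta, which is
   2^(m-k) [u y^eta in F_(2^k)] P^(u y^eta), P^ being the Fourier transform of P on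
   F_(2^k); P^(0) = 0 because P is balanced.  For u <> 0, y |-> u y^eta is a
   bijection with inverse c |-> (c/u)^e, and c^e = c^(2^l) on F_(2^k); raising to the
   power 2^(m-l) turns the outer character into chi_k(c a) with
   a = Tr_k^m(v u^-e)^(2^(m-l)), and Fourier inversion on F_(2^k) gives 2^m (-1)^P(a). *)

From HB Require Import structures.
From mathcomp Require Import all_boot all_order all_algebra all_field.
Set Implicit Arguments. Unset Strict Implicit. Unset Printing Implicit Defensive.
Import GRing.Theory Num.Theory.
Local Open Scope ring_scope.

Lemma sum_delta (I : finType) (R : pzSemiRingType) (A : {pred I}) (f : I -> R) a :
  \sum_(i in A) f i * (i == a)%:R = if a \in A then f a else 0.
Proof.
have [aA|aNA] := boolP (a \in A).
  rewrite (bigD1 a) //= eqxx mulr1 big1 ?addr0 // => i /andP[_ /negbTE ->].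
  exact: mulr0.
rewrite big1 // => i iA; have /negbTE -> : i != a by apply: contraNneq aNA => <-.
exact: mulr0.
Qed.

Lemma big_ord_mul_split (V : nmodType) (f : nat -> V) d n :
  \sum_(p < d * n) f p = \sum_(i < n) \sum_(j < d) f (d * i + j)%N.
Proof.
elim: n => [|n IHn]; first by rewrite muln0 !big_ord0.
rewrite big_ord_recr /= -IHn -!(big_mkord xpredT).
rewrite (@big_cat_nat _ _ _ (d * n)) ?leq_mul2l ?leqnSn ?orbT //=.
congr (_ + _); rewrite -{1}[(d * n)%N]add0n big_addn mulnSr addKn big_mkord.
by apply: eq_bigr => j _; rewrite addnC.
Qed.

Lemma sum_sign_balancedOn (F : finFieldType) k (P : F -> bool) :
  balancedOn k P -> \sum_(t in subfK F k) (-1 : int) ^+ P t = 0.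
Proof.
move=> bal; rewrite (bigID P) /=.
rewrite (eq_bigl (fun t => t \in [set z in subfK F k | P z])) => [|t]; last by rewrite !inE.
rewrite [X in _ + X](eq_bigl (fun t => t \in [set z in subfK F k | ~~ P z])) => [|t];
  last by rewrite !inE.
rewrite (eq_bigr (fun _ => -1)) => [|t /setIdP[_ ->]] //.
rewrite [X in _ + X](eq_bigr (fun _ => 1)) => [|t /setIdP[_ /negbTE ->]] //.
by rewrite !sumr_const bal mulNrn addNr.
Qed.

Lemma negpow0 (F : finFieldType) m t : negpow m t (0 : F) = 0.
Proof. by rewrite /negpow eqxx. Qed.

Lemma negpowX (F : finFieldType) m t n (z : F) :
  (0 < n)%N -> negpow m t (z ^+ n) = negpow m t z ^+ n.
Proof.
move=> n_gt0; rewrite /negpow expf_eq0 n_gt0 /=.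
by case: (z == 0); [rewrite expr0n (gtn_eqF n_gt0) | rewrite -!exprM mulnC].
Qed.


Section FixedField.

Variable F : finFieldType.

Lemma subfKP n (z : F) : reflect (z ^+ (2 ^ n) = z) (z \in subfK F n).
Proof. by rewrite inE; apply: eqP. Qed.

Lemma expr0_exp2n n : (0 : F) ^+ (2 ^ n) = 0.
Proof. by rewrite expr0n expn_eq0. Qed.

Lemma subfK0 n : 0 \in subfK F n.
Proof. by apply/subfKP; rewrite expr0_exp2n. Qed.

Lemma card_subfK_gt0 n : (0 < #|subfK F n|)%N.
Proof. by apply/card_gt0P; exists 0; apply: subfK0. Qed.

Lemma subfKM n (a b : F) : a \in subfK F n -> b \in subfK F n -> a * b \in subfK F n.
Proof. by move=> /subfKP aK /subfKP bK; apply/subfKP; rewrite exprMn aK bK. Qed.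

Lemma subfKV n (a : F) : a \in subfK F n -> a^-1 \in subfK F n.
Proof. by move=> /subfKP aK; apply/subfKP; rewrite exprVn aK. Qed.

Lemma subfKX n j (z : F) : z \in subfK F n -> z ^+ j \in subfK F n.
Proof. by move=> /subfKP zK; apply/subfKP; rewrite exprAC zK. Qed.

Lemma subfK_exp2n n j (z : F) : z \in subfK F n -> z ^+ (2 ^ (n * j)) = z.
Proof.
move=> /subfKP zK; elim: j => [|j IHj]; first by rewrite muln0 expr1.
by rewrite mulnS expnD exprM zK IHj.
Qed.

Lemma subfK_exp_pred n (c : F) : c \in subfK F n -> c != 0 -> c ^+ (2 ^ n).-1 = 1.
Proof.
by move=> /subfKP cK c0; apply: (mulIf c0); rewrite mul1r -exprSr prednK ?expn_gt0.
Qed.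

Lemma subfK_expr_mod n (c : F) i j : c \in subfK F n ->
  i = j %[mod (2 ^ n).-1] -> (0 < i)%N -> (0 < j)%N -> c ^+ i = c ^+ j.
Proof.
move=> cK eq_ij i_gt0 j_gt0; have [->|c0] := eqVneq c 0.
  by rewrite !expr0n (gtn_eqF i_gt0) (gtn_eqF j_gt0).
have c1 := subfK_exp_pred cK c0.
by rewrite -(expr_mod _ c1) eq_ij expr_mod.
Qed.

Lemma subfK1 (t : F) : t \in subfK F 1 -> t = 0 \/ t = 1.
Proof.
move=> /subfKP t2; have : t * (t - 1) == 0 by rewrite mulrBr mulr1 -expr2 t2 subrr.
by rewrite mulf_eq0 subr_eq0 => /orP[] /eqP; [left | right].
Qed.

Section Char2.

Hypothesis charF : 2%N \in [pchar F].

Lemma exp2nD n (a b : F) : (a + b) ^+ (2 ^ n) = a ^+ (2 ^ n) + b ^+ (2 ^ n).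
Proof. by apply: exprDn_pchar; rewrite pnatX (pnatE _ (pcharf_prime charF)) charF. Qed.

Lemma exp2n_sum (I : finType) (f : I -> F) n :
  (\sum_i f i) ^+ (2 ^ n) = \sum_i f i ^+ (2 ^ n).
Proof. exact: (big_morph _ (exp2nD n) (expr0_exp2n n)). Qed.

Lemma subfKD n (a b : F) : a \in subfK F n -> b \in subfK F n -> a + b \in subfK F n.
Proof. by move=> /subfKP aK /subfKP bK; apply/subfKP; rewrite exp2nD aK bK. Qed.

Lemma subfKDr n (a b : F) : b \in subfK F n -> (a + b \in subfK F n) = (a \in subfK F n).
Proof.
move=> bK; apply/idP/idP => [abK|aK]; last exact: subfKD.
by rewrite -(addrK_pchar2 charF b a); apply: subfKD.
Qed.

(* The relative trace Tr_d^(d n); [tr1 n] and [trKM k m] are instances of it. *)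
Definition reltr d n (z : F) : F := \sum_(i < n) z ^+ (2 ^ (d * i)).

Lemma tr1E n (z : F) : tr1 n z = reltr 1 n z.
Proof. by apply: eq_bigr => i _; rewrite mul1n. Qed.

Lemma reltr0 d n : reltr d n 0 = 0.
Proof. by rewrite /reltr big1 // => i _; rewrite expr0_exp2n. Qed.

Lemma reltrD d n : {morph reltr d n : a b / a + b}.
Proof. by move=> a b; rewrite /reltr -big_split; apply: eq_bigr => i _; rewrite exp2nD. Qed.

Lemma reltrZ d n (c z : F) : c \in subfK F d -> reltr d n (c * z) = c * reltr d n z.
Proof.
move=> cK; rewrite /reltr mulr_sumr; apply: eq_bigr => i _.
by rewrite exprMn (subfK_exp2n i cK).
Qed.

Lemma reltr_exp2n d n j (z : F) : reltr d n z ^+ (2 ^ j) = reltr d n (z ^+ (2 ^ j)).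
Proof. by rewrite exp2n_sum; apply: eq_bigr => i _; rewrite -!exprM mulnC. Qed.

Lemma reltr_subfK d n (z : F) : z \in subfK F (d * n) -> reltr d n z \in subfK F d.
Proof.
move=> /subfKP zK; apply/subfKP; rewrite reltr_exp2n /reltr.
case: n zK => [|n] zK; first by rewrite !big_ord0.
rewrite big_ord_recr big_ord_recl /= muln0 expr1 addrC; congr (_ + _).
  by rewrite -exprM -expnD -mulnS.
by apply: eq_bigr => i _; rewrite -exprM -expnD -mulnS.
Qed.

Lemma reltr_trans d n (z : F) : reltr 1 (d * n) z = reltr 1 d (reltr d n z).
Proof.
rewrite /reltr (big_ord_mul_split (fun p => z ^+ (2 ^ (1 * p)))) exchange_big /=.
apply: eq_bigr => j _; rewrite exp2n_sum; apply: eq_bigr => i _.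
by rewrite -exprM -expnD !mul1n.
Qed.

Lemma tr1_subfK n (z : F) : z \in subfK F n -> tr1 n z \in subfK F 1.
Proof. by rewrite tr1E -{1}[n]mul1n; apply: reltr_subfK. Qed.

Lemma tr1_exp2n n j (z : F) : z \in subfK F n -> tr1 n (z ^+ (2 ^ j)) = tr1 n z.
Proof.
by move=> zK; rewrite !tr1E -reltr_exp2n -tr1E -[j]mul1n (subfK_exp2n _ (tr1_subfK zK)).
Qed.

Definition addchar n (z : F) : int := (-1) ^+ (tr1 n z != 0).

Lemma addchar0 n : addchar n 0 = 1.
Proof. by rewrite /addchar tr1E reltr0 eqxx. Qed.

Lemma addcharD n (a b : F) : a \in subfK F n -> b \in subfK F n ->
  addchar n (a + b) = addchar n a * addchar n b.
Proof.
move=> /tr1_subfK aK /tr1_subfK bK; rewrite /addchar tr1E reltrD -!tr1E -signr_addb.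
case/subfK1: aK => ->; case/subfK1: bK => ->;
  by rewrite ?addr0 ?add0r ?addrr_pchar2 ?eqxx ?oner_neq0.
Qed.

Lemma addchar_exp2n n j (z : F) : z \in subfK F n -> addchar n (z ^+ (2 ^ j)) = addchar n z.
Proof. by move=> zK; rewrite /addchar tr1_exp2n. Qed.

Section Orthogonality.

Variables (n : nat) (z0 : F).
Hypotheses (z0K : z0 \in subfK F n) (tr_z0 : tr1 n z0 != 0).

Local Notation K := (subfK F n).

Lemma sum_addchar s : s \in K ->
  \sum_(c in K) addchar n (c * s) = #|K|%:R * (s == 0)%:R.
Proof.
move=> sK; have [->|s0] := eqVneq s 0.
  by rewrite mulr1 -sumr_const; apply: eq_bigr => c _; rewrite mulr0 addchar0.
have z0s_K : z0 / s \in K by rewrite subfKM ?subfKV.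
have char_z0 : addchar n z0 = -1.
  by rewrite /addchar; case/subfK1: (tr1_subfK z0K) tr_z0 => ->; rewrite ?eqxx ?oner_neq0.
(* Translating c by z0 / s multiplies every term by addchar n z0 = -1. *)
set S := \sum_(c in K) _; have : S = - S.
  rewrite {1}/S (reindex_inj (addIr (z0 / s))) -sumrN.
  apply: eq_big => [c|c]; rewrite /= subfKDr // => cK.
  by rewrite mulrDl divfK // addcharD ?char_z0 ?mulrN1 // subfKM.
by move/eqP; rewrite -addr_eq0 -mulr2n mulrn_eq0 mulr0 => /eqP.
Qed.

Lemma addchar_inversion (h : F -> int) a : a \in K ->
  \sum_(c in K) addchar n (c * a) * \sum_(t in K) h t * addchar n (c * t)
    = #|K|%:R * h a.
Proof.
move=> aK; transitivity (\sum_(t in K) h t * \sum_(c in K) addchar n (c * (a + t))).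
  under eq_bigr => c cK do rewrite mulr_sumr.
  rewrite exchange_big /=; apply: eq_bigr => t tK; rewrite mulr_sumr.
  by apply: eq_bigr => c cK; rewrite mulrDr addcharD ?subfKM // mulrCA.
under eq_bigr => t tK do rewrite sum_addchar ?subfKD // addr_eq0 oppr_pchar2 // eq_sym mulrCA.
by rewrite -mulr_sumr sum_delta aK.
Qed.

End Orthogonality.

Section FiniteField.

Variable m : nat.
Hypotheses (cardF : #|F| = (2 ^ m)%N) (m_gt0 : (0 < m)%N).

Lemma exp2m_id (z : F) : z ^+ (2 ^ m) = z.
Proof. by rewrite -cardF expf_card. Qed.

Lemma subfK_full (z : F) : z \in subfK F m.
Proof. exact/subfKP/exp2m_id. Qed.

(* The trace polynomial has degree 2^(m-1) < #|F|, so it cannot vanish on all of F. *)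
Lemma exists_tr1_neq0 : exists z : F, tr1 m z != 0.
Proof.
have [n m_eq] : exists n, m = n.+1 by exists m.-1; rewrite prednK.
apply/existsP; apply: contraT; rewrite negb_exists => /forallP tr1_eq0.
set p : {poly F} := \sum_(i < m) 'X^(2 ^ i).
have size_p : size p = (2 ^ n).+1.
  rewrite /p m_eq big_ord_recr /= addrC size_polyDl size_polyXn //.
  apply: leq_ltn_trans (size_sum _ _ _) _; rewrite ltnS.
  by apply/bigmax_leqP => i _; rewrite size_polyXn ltn_exp2l.
have p_neq0 : p != 0 by rewrite -size_poly_eq0 size_p.
have p_roots : all (root p) (enum F).
  apply/allP => z _; rewrite /root /p horner_sum.
  have := tr1_eq0 z; rewrite negbK; congr (_ == 0).
  by apply: eq_bigr => i _; rewrite hornerXn.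
have := max_poly_roots p_neq0 p_roots (enum_uniq F).
by rewrite -cardE cardF size_p m_eq expnS ltnS leqNgt ltn_Pmull ?expn_gt0.
Qed.

Lemma sum_addcharF (w : F) : \sum_x addchar m (w * x) = #|F|%:R * (w == 0)%:R.
Proof.
have [z0 tr_z0] := exists_tr1_neq0.
rewrite cardT -(eq_cardT subfK_full) -(sum_addchar (subfK_full z0) tr_z0 (subfK_full w)).
by apply: eq_big => [x|x _]; rewrite ?subfK_full // mulrC.
Qed.

Lemma negpowE t (y : F) : y != 0 -> negpow m t y = (y ^+ t)^-1.
Proof.
move=> y0; rewrite /negpow (negbTE y0) mulnC exprM -exprVn; congr (_ ^+ t).
have two_le : (1 < 2 ^ m)%N by rewrite -{1}(expn0 2) ltn_exp2l.
apply: (mulIf y0); rewrite mulVf // -exprSr -subSn // subn2 /=.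
by rewrite (subfK_exp_pred (subfK_full y) y0).
Qed.

Section Subfield.

Variable k : nat.
Hypothesis k_dvd_m : (k %| m)%N.

Local Notation K := (subfK F k).

Lemma trKME (z : F) : trKM k m z = reltr k (m %/ k) z.
Proof. by []. Qed.

Lemma trKM_subfK (z : F) : trKM k m z \in K.
Proof. by apply: reltr_subfK; rewrite mulnC divnK // subfK_full. Qed.

Lemma tr1_trKM (z : F) : tr1 m z = tr1 k (trKM k m z).
Proof. by rewrite !tr1E -reltr_trans mulnC divnK. Qed.

Lemma addchar_trKM (c z : F) : c \in K ->
  addchar m (c * z) = addchar k (c * trKM k m z).
Proof. by move=> cK; rewrite /addchar tr1_trKM !trKME reltrZ. Qed.

Lemma exists_subfK_tr1_neq0 : exists2 z : F, z \in K & tr1 k z != 0.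
Proof.
have [z0 tr_z0] := exists_tr1_neq0.
by exists (trKM k m z0); [exact: trKM_subfK | rewrite -tr1_trKM].
Qed.

Definition fourierK (h : F -> int) (c : F) : int :=
  if c \in K then \sum_(t in K) h t * addchar k (c * t) else 0.

Lemma fourier_trKM (h : F -> int) (w : F) :
  #|K|%:R * \sum_z h (trKM k m z) * addchar m (w * z) = #|F|%:R * fourierK h w.
Proof.
have [z1 z1K tr_z1] := exists_subfK_tr1_neq0.
set hK := fun c => \sum_(t in K) h t * addchar k (c * t).
have expand z : #|K|%:R * h (trKM k m z) = \sum_(c in K) addchar m (c * z) * hK c.
  rewrite -(addchar_inversion z1K tr_z1 h (trKM_subfK z)).
  by apply: eq_bigr => c cK; rewrite addchar_trKM.
transitivity (\sum_(c in K) hK c * \sum_z addchar m ((c + w) * z)).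
  rewrite mulr_sumr; under eq_bigr => z _ do rewrite mulrA expand mulr_suml.
  rewrite exchange_big /=; apply: eq_bigr => c cK; rewrite mulr_sumr.
  by apply: eq_bigr => z _; rewrite mulrDl addcharD ?subfK_full // mulrAC mulrC.
under eq_bigr => c _ do rewrite sum_addcharF addr_eq0 (oppr_pchar2 charF) mulrCA.
by rewrite -mulr_sumr sum_delta.
Qed.

Section BentDual.

Variables (e l eta : nat) (P : F -> bool).
Hypotheses (e_gt0 : (0 < e)%N) (l_le_m : (l <= m)%N) (eta_gt0 : (0 < eta)%N).
Hypothesis e_mod : e = (2 ^ l)%N %[mod (2 ^ k).-1].
Hypothesis eta_e : (eta * e = 1 %[mod (2 ^ m).-1])%N.
Hypothesis P_bal : balancedOn k P.

Local Notation sgnP t := ((-1 : int) ^+ P t).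
Local Notation g := (fun x y : F => P (trKM k m (x * negpow m eta y))).
Local Notation hatP := (fourierK (fun t => sgnP t)).

Definition dual_point (u v : F) : F := trKM k m (v * negpow m e u) ^+ (2 ^ (m - l)).

Definition walsh_inner (u y : F) : int :=
  \sum_x sgnP (trKM k m (x * negpow m eta y)) * addchar m (u * x).

Lemma walsh2_inner u v : walsh2 m g u v = \sum_y addchar m (v * y) * walsh_inner u y.
Proof.
rewrite /walsh2 exchange_big /=; apply: eq_bigr => y _; rewrite /walsh_inner mulr_sumr.
apply: eq_bigr => x _; rewrite -/(addchar m (u * x + v * y)) addcharD ?subfK_full //.
by rewrite [addchar m (u * x) * _]mulrC mulrCA.
Qed.

Lemma walsh_inner0 u : walsh_inner u 0 = #|F|%:R * (u == 0)%:R * sgnP 0.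
Proof.
rewrite /walsh_inner; under eq_bigr do rewrite negpow0 mulr0 trKME reltr0.
by rewrite -mulr_sumr sum_addcharF mulrC.
Qed.

Lemma walsh_inner_neq0 u y : y != 0 ->
  #|K|%:R * walsh_inner u y = #|F|%:R * hatP (u * y ^+ eta).
Proof.
move=> y0; have yeta0 : y ^+ eta != 0 by rewrite expf_neq0.
rewrite -fourier_trKM // /walsh_inner (reindex_inj (mulIf yeta0)) /= negpowE //.
by congr (_ * _); apply: eq_bigr => x _; rewrite mulfK // mulrA mulrAC.
Qed.

Lemma hatP0 : hatP 0 = 0.
Proof.
rewrite /fourierK subfK0 -[RHS](sum_sign_balancedOn P_bal).
by apply: eq_bigr => t _; rewrite mul0r addchar0 mulr1.
Qed.

Lemma walsh2_at0 v : walsh2 m g 0 v = #|F|%:R * sgnP (dual_point 0 v).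
Proof.
have -> : dual_point 0 v = 0.
  by rewrite /dual_point negpow0 mulr0 trKME reltr0 expr0_exp2n.
rewrite walsh2_inner (bigD1 0) //= big1 => [|y y0].
  by rewrite mulr0 addchar0 walsh_inner0 eqxx mulr1 mul1r addr0.
move/eqP: (walsh_inner_neq0 0 y0); rewrite mul0r hatP0 mulr0.
by rewrite mulf_eq0 pnatr_eq0 eqn0Ngt card_subfK_gt0 => /eqP ->; rewrite mulr0.
Qed.

Lemma addchar_dual_point u v c : u != 0 -> c \in K ->
  addchar m (v * (c / u) ^+ e) = addchar k (c * dual_point u v).
Proof.
move=> u0 cK; rewrite exprMn (subfK_expr_mod cK e_mod e_gt0) ?expn_gt0 //.
rewrite exprVn -negpowE // mulrCA -(addchar_exp2n (m - l) (subfK_full _)).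
rewrite exprMn -exprM -expnD subnKC // exp2m_id addchar_trKM //.
by rewrite /dual_point !trKME reltr_exp2n.
Qed.

Lemma walsh2_unit u v : u != 0 -> walsh2 m g u v = #|F|%:R * sgnP (dual_point u v).
Proof.
move=> u0; have [z1 z1K tr_z1] := exists_subfK_tr1_neq0.
have aK : dual_point u v \in K by rewrite subfKX ?trKM_subfK.
have inner_all y : #|K|%:R * walsh_inner u y = #|F|%:R * hatP (u * y ^+ eta).
  have [->|y0] := eqVneq y 0; last exact: walsh_inner_neq0.
  by rewrite walsh_inner0 (negbTE u0) expr0n (gtn_eqF eta_gt0) !mulr0n !mulr0 mul0r hatP0 !mulr0.
have eta_eK c : u * ((c / u) ^+ e) ^+ eta = c.
  rewrite -exprM mulnC (subfK_expr_mod (subfK_full _) eta_e) ?muln_gt0 ?eta_gt0 //.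
  by rewrite expr1 mulrC divfK.
have cardK0 : (#|K|%:R : int) != 0 by rewrite pnatr_eq0 -lt0n card_subfK_gt0.
apply: (mulfI cardK0); rewrite walsh2_inner mulr_sumr.
transitivity (#|F|%:R * \sum_y addchar m (v * y) * hatP (u * y ^+ eta)).
  by rewrite mulr_sumr; apply: eq_bigr => y _; rewrite mulrCA inner_all mulrCA.
rewrite (reindex_inj (can_inj (g := fun y => u * y ^+ eta) eta_eK)) /=.
under eq_bigr do rewrite eta_eK.
rewrite mulrCA -(addchar_inversion z1K tr_z1 (fun t => sgnP t) aK); congr (_ * _).
rewrite [RHS]big_mkcond; apply: eq_bigr => c _; rewrite /fourierK.
by case: ifP => cK; [rewrite addchar_dual_point | rewrite mulr0].
Qed.

Lemma walsh2_bent u v : walsh2 m g u v = #|F|%:R * sgnP (dual_point u v).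
Proof. by have [->|u0] := eqVneq u 0; [exact: walsh2_at0 | exact: walsh2_unit]. Qed.

End BentDual.

End Subfield.

End FiniteField.

End Char2.

End FixedField.

Theorem lemma4p2 (F : finFieldType) (m k e l eta : nat) (P : F -> bool) :
  #|F| = (2 ^ m)%N -> (2%N \in [pchar F]) ->
  (0 < m)%N -> (0 < k)%N -> (0 < e)%N -> (l <= m)%N -> (k %| m)%N ->
  e = (2 ^ l)%N %[mod (2 ^ k).-1] ->
  coprime (2 ^ m).-1 e ->
  (0 < eta)%N -> (eta * e = 1 %[mod (2 ^ m).-1])%N ->
  balancedOn k P ->
  let g := fun x y : F => P (trKM k m (x * negpow m eta y)) in
  forall u v : F,
    walsh2 m g u v
      = (2 ^ m)%:Z * (-1) ^+ (P ((trKM k m (v * negpow m e u)) ^+ (2 ^ (m - l))))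
    /\ P ((trKM k m (v * negpow m e u)) ^+ (2 ^ (m - l)))
       = P (trKM k m (v ^+ (2 ^ (m - l)) * negpow m e (u ^+ (2 ^ (m - l))))).
Proof.
(* [0 < k] follows from [k %| m] and [0 < m]; coprimality follows from [eta_e]. *)
move=> cardF charF m_gt0 _ e_gt0 l_le_m k_dvd_m e_mod _ eta_gt0 eta_e P_bal g u v.
split; last by rewrite !trKME (reltr_exp2n charF) exprMn negpowX ?expn_gt0.
rewrite /g (walsh2_bent charF cardF m_gt0 k_dvd_m e_gt0 l_le_m eta_gt0 e_mod eta_e P_bal).
by rewrite cardF natz.
Qed.
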